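(* Let $A\in\mathbb{R}^{2\times 2}$ and $C\in\mathbb{R}^{1\times 2}$, with $(A,C)$ an observable pair and all eigenvalues of $A$ nonzero. (i) If there is no positive integer $h$ such that $A$ has two distinct eigenvalues $\lambda_1\neq\lambda_2$ with $\lambda_1^h=\lambda_2^h$, then for any two distinct nonnegative integers $t_1,t_2$ the matrix with rows $CA^{t_1},CA^{t_2}$ has rank $2$. (ii) If $A$ has two distinct eigenvalues $\lambda_1\neq\lambda_2$ with $\lambda_1^h=\lambda_2^h$ for some positive integer $h$, let $\bar h$ be the smallest such positive integer. Then for any $t\in\{0,1,2,\ldots\}$, any positive integer $T$, and any set of $N_s$ distinct integers $t_1,\ldots,t_{N_s}$ in $[t,t+T-1]$ with $N_s\geq 1+T/\bar h$, the matrix with rows $CA^{t_1},\ldots,CA^{t_{N_s}}$ has rank $2$.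
   Context: Setting: discrete-time single-output system $x(t+1)=Ax(t)+Bu(t)$, $y(t)=Cx(t)+Du(t)$ with output measured at selected time instances; the matrix with rows $CA^{t_i}$ is the sample-based observability matrix and rank $n$ means sample-based observability. $(A,C)$ observable means the matrix with rows $C,CA$ has rank $2$. *)

From HB Require Import structures.
From mathcomp Require Import all_boot all_order all_algebra.
From mathcomp Require Import reals.
From mathcomp Require Import complex.
Set Implicit Arguments. Unset Strict Implicit. Unset Printing Implicit Defensive.
Import Order.TTheory GRing.Theory Num.Theory.
Local Open Scope ring_scope.

Definition cplx_mx (R : realType) (A : 'M[R]_2) : 'M[R[i]]_2 :=
  map_mx (fun x => (x%:C)%C) A.

Definition eigval (R : realType) (A : 'M[R]_2) (lam : R[i]) : Prop :=
  eigenvalue (cplx_mx A) lam.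

Definition observable (R : realType) (A : 'M[R]_2) (C : 'rV[R]_2) : Prop :=
  \rank (col_mx C (C *m A)) = 2%N.

Definition sample_obs_mx (R : realType) (A : 'M[R]_2) (C : 'rV[R]_2)
  (Ns : nat) (ts : 'I_Ns -> nat) : 'M[R]_(Ns, 2) :=
  \matrix_(i < Ns, j < 2) (C *m A ^+ ts i) 0 j.

Definition has_eig_collision (R : realType) (A : 'M[R]_2) (h : nat) : Prop :=
  exists l1 l2 : R[i], [/\ eigval A l1, eigval A l2, l1 <> l2 & l1 ^+ h = l2 ^+ h].

From HB Require Import structures.
From mathcomp Require Import all_boot all_order all_algebra.
From mathcomp Require Import reals complex ring zify.
Set Implicit Arguments.
Unset Strict Implicit.
Unset Printing Implicit Defensive.

Import Order.TTheory GRing.Theory Num.Theory.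
Local Open Scope ring_scope.

(* If two samples C A^s and C A^(s+d) are proportional then, since C, C A is a
   basis and A is invertible, A^d commutes with A and fixes the row C up to a
   scalar, so A^d is a scalar matrix c.  Every eigenvalue l of A then satisfies
   l^d = c.  A cannot have a single eigenvalue: then A = l + N with N^2 = 0, and
   A^d = l^d + d l^(d-1) N being scalar forces N = 0, i.e. A scalar, which
   contradicts observability.  So two distinct eigenvalues collide at power d.
   Consequently, if the sample-based matrix is rank deficient, any two sample
   times are at least hbar apart, and a window of length T holds at most
   1 + (T - 1) / hbar of them. *)

Section FieldMatrices.
Variable F : fieldType.

Lemma mxrank_col_mxC m1 m2 n (A : 'M[F]_(m1, n)) (B : 'M_(m2, n)) :
  \rank (col_mx A B) = \rank (col_mx B A).
Proof. by rewrite -!addsmxE addsmxC. Qed.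

Lemma mxrank_col_mx_row m n (A : 'M[F]_(m, n)) i j :
  (\rank (col_mx (row i A) (row j A)) <= \rank A)%N.
Proof. by apply: mxrankS; rewrite col_mx_sub !row_sub. Qed.

Lemma rV_proportional n (u v : 'rV[F]_n) :
  u != 0 -> (\rank (col_mx u v) < 2)%N -> exists k, v = k *: u.
Proof.
move=> u_neq0 rk_lt2.
have /geq_leqif := mxrank_leqif_sup (addsmxSl u v).
rewrite addsmxE rank_rV u_neq0 -ltnS rk_lt2 addsmx_sub submx_refl /=.
move=> /esym /submxP [D ->]; exists (D 0 0).
by rewrite {1}(mx11_scalar D) mul_scalar_mx.
Qed.

Lemma mxrank_col_mx_mul_scalar n (u : 'rV[F]_n) a :
  (\rank (col_mx u (u *m a%:M)) <= 1)%N.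
Proof.
apply: leq_trans (rank_leq_row u); apply: mxrankS.
by rewrite col_mx_sub submx_refl mul_mx_scalar scalemx_sub.
Qed.

Lemma mxrank_col_mx_mul_pow m n (C : 'M[F]_(m, n.+1)) (M : 'M_n.+1) t d :
  M \in unitmx ->
  \rank (col_mx (C *m M ^+ t) (C *m M ^+ (t + d))) = \rank (col_mx C (C *m M ^+ d)).
Proof.
move=> M_unit; rewrite addnC exprD -[_ * _]/(_ *m _) mulmxA -mul_col_mx mxrankMfree //.
by rewrite row_free_unit; exact: (unitrX t M_unit).
Qed.

Lemma eigenvalue0 n (M : 'M[F]_n) : eigenvalue M 0 = (M \notin unitmx).
Proof. by rewrite /eigenvalue /eigenspace raddf0 subr0 kermx_eq0 row_free_unit. Qed.

Lemma eigenvalue_pow n (M : 'M[F]_n) l d c :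
  eigenvalue M l -> M ^+ d = c%:M -> l ^+ d = c.
Proof.
move=> /eigenvalueP [v v_eigen v_neq0] Md.
have v_pow k : v *m M ^+ k = l ^+ k *: v.
  elim: k => [|k IH]; first by rewrite !expr0 scale1r mulmx1.
  by rewrite exprSr -[_ * M]/(_ *m M) mulmxA IH -scalemxAl v_eigen scalerA -exprSr.
apply/eqP; move: (v_pow d); rewrite Md mul_mx_scalar => /eqP.
by rewrite -subr_eq0 -scalerBl scaler_eq0 (negbTE v_neq0) orbF subr_eq0 eq_sym.
Qed.

Lemma scalar_mx_of_cyclic_eigen (C : 'rV[F]_2) (M P : 'M[F]_2) k :
  \rank (col_mx C (C *m M)) = 2 -> GRing.comm M P -> C *m P = k *: C -> P = k%:M.
Proof.
move=> rkC MP CP.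
have O_unit : col_mx C (C *m M) \in unitmx by rewrite -row_free_unit /row_free rkC.
have O_ker : col_mx C (C *m M) *m (P - k%:M) = 0.
  rewrite mul_col_mx !mulmxBr !mul_mx_scalar CP subrr -mulmxA -[M *m P]/(M * P) MP.
  by rewrite mulmxA CP -scalemxAl subrr col_mx0.
by apply/eqP; rewrite -subr_eq0 -(mulKmx O_unit (P - k%:M)) O_ker mulmx0.
Qed.

Lemma scalar_pow_of_rank_lt2 (C : 'rV[F]_2) (M : 'M[F]_2) t d :
  \rank (col_mx C (C *m M)) = 2 -> M \in unitmx ->
  (\rank (col_mx (C *m M ^+ t) (C *m M ^+ (t + d))) < 2)%N -> exists c, M ^+ d = c%:M.
Proof.
move=> rkC M_unit; rewrite mxrank_col_mx_mul_pow // => rk_lt2.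
have C_neq0 : C != 0 by apply/eqP => C0; move: rkC; rewrite C0 mul0mx col_mx0 mxrank0.
have [k CMd] := rV_proportional C_neq0 rk_lt2.
by exists k; apply: scalar_mx_of_cyclic_eigen rkC _ CMd; apply/commrX/commr_refl.
Qed.

Hypothesis F_char0 : has_pchar0 F.

Lemma exp_scalar_add_nil2 n (N : 'M[F]_n) l d : N ^+ 2 = 0 ->
  (l%:M + N) ^+ d.+1 = (l ^+ d.+1)%:M + (d.+1%:R * l ^+ d) *: N.
Proof.
move=> N2; elim: d => [|d IH]; first by rewrite !expr1 expr0 mulr1 scale1r.
rewrite exprSr IH -[_ * _]/(_ *m _) mulmxDl !mulmxDr -scalar_mxM mul_scalar_mx.
rewrite mul_mx_scalar -scalemxAl -[N *m N]/(N ^+ 2) N2 scaler0 addr0 scalerA.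
rewrite -addrA -scalerDl -exprSr; congr (_ + _ *: _).
by rewrite -[d.+2]addn1 natrD exprS; ring.
Qed.

Lemma nil2_eq0_of_scalar_pow n (N : 'M[F]_n) l d c :
  N ^+ 2 = 0 -> l != 0 -> (l%:M + N) ^+ d.+1 = c%:M -> N = 0.
Proof.
move=> N2 l_neq0; rewrite exp_scalar_add_nil2 // => /(congr1 (fun X => X - (l ^+ d.+1)%:M)).
rewrite addrAC subrr add0r -(raddfB (@scalar_mx F n)) => kN.
set k := _ * _ in kN.
have k_neq0 : k != 0.
  by rewrite mulf_neq0 ?expf_neq0 // ((pcharf0P F).1 F_char0 d.+1).
have N_scalar : N = (k^-1 * (c - l ^+ d.+1))%:M.
  by rewrite -scale_scalar_mx -kN scalerA mulVf // scale1r.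
move: N2; rewrite expr2 {1}N_scalar -[_ * _]/(_ *m _) mul_scalar_mx => /eqP.
rewrite scaler_eq0 => /orP [/eqP mu0 | /eqP //].
by rewrite N_scalar mu0 raddf0.
Qed.

End FieldMatrices.

Section ClosedFieldMatrices.
Variable F : closedFieldType.
Hypothesis F_char0 : has_pchar0 F.

Lemma eigenvalue_mx2_cases (M : 'M[F]_2) :
  (exists l1 l2, [/\ eigenvalue M l1, eigenvalue M l2 & l1 != l2]) \/
  (exists2 l, eigenvalue M l & (M - l%:M) ^+ 2 = 0).
Proof.
have [r charM] := closed_field_poly_normal (char_poly M).
rewrite (monicP (char_poly_monic M)) scale1r in charM.
have /eqP := size_char_poly M; rewrite charM size_prod_XsubC eqSS.
case: r charM => [|a [|b []]] // charM _.
have eig x : x \in [:: a; b] -> eigenvalue M x.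
  by rewrite eigenvalue_root_char charM root_prod_XsubC.
have [eq_ab|neq_ab] := eqVneq a b; last first.
  by left; exists a, b; split; rewrite ?eig // !inE eqxx ?orbT.
right; exists a; first by apply: eig; rewrite mem_head.
have := Cayley_Hamilton M; rewrite charM -eq_ab !big_cons big_nil mulr1 -expr2.
by rewrite rmorphXn rmorphB /= horner_mx_X horner_mx_C.
Qed.

Lemma eig_collision_of_scalar_pow (C : 'rV[F]_2) (M : 'M[F]_2) d c :
  \rank (col_mx C (C *m M)) = 2 -> M \in unitmx -> (0 < d)%N -> M ^+ d = c%:M ->
  exists l1 l2, [/\ eigenvalue M l1, eigenvalue M l2, l1 != l2 & l1 ^+ d = l2 ^+ d].
Proof.
move=> rkC M_unit d_gt0 Md.
have [[l1 [l2 [eig1 eig2 l12]]] | [l eigl nil2]] := eigenvalue_mx2_cases M.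
  by exists l1, l2; rewrite (eigenvalue_pow eig1 Md) (eigenvalue_pow eig2 Md).
have l_neq0 : l != 0 by apply: contraTneq eigl => ->; rewrite eigenvalue0 M_unit.
have M_scalar : M = l%:M.
  have MlN : M = l%:M + (M - l%:M) by rewrite addrC subrK.
  case: d d_gt0 Md => // d _; rewrite {1}MlN => Md.
  by rewrite {1}MlN (nil2_eq0_of_scalar_pow F_char0 nil2 l_neq0 Md) addr0.
by move: (mxrank_col_mx_mul_scalar C l); rewrite -M_scalar rkC.
Qed.

End ClosedFieldMatrices.

Lemma card_sparse_window (Ns t T g : nat) (ts : 'I_Ns -> nat) :
  (0 < g)%N -> (0 < T)%N -> injective ts -> (forall i, t <= ts i < t + T)%N ->
  (forall i j, ts i < ts j -> g <= ts j - ts i)%N ->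
  (Ns * g < g + T)%N.
Proof.
move=> g_gt0 T_gt0 ts_inj ts_window ts_sparse.
have bucket_lt i : ((ts i - t) %/ g < (T.-1 %/ g).+1)%N.
  by rewrite ltnS leq_div2r //; have := ts_window i; lia.
have bucket_mono i j : (ts i < ts j -> (ts i - t) %/ g < (ts j - t) %/ g)%N.
  move=> lt_ij; have := ts_sparse _ _ lt_ij; have := ts_window i => wi gap.
  have -> : (ts j - t = (ts i - t) + 1 * g + (ts j - ts i - g))%N by lia.
  by apply: leq_trans (leq_div2r _ (leq_addr _ _)); rewrite divnDMl // addn1.
have bucket_inj : injective (fun i => Ordinal (bucket_lt i)).
  move=> i j [eq_ij]; apply: ts_inj.
  by case: (ltngtP (ts i) (ts j)) => // /bucket_mono; rewrite eq_ij ltnn.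
have := leq_card _ bucket_inj; rewrite !card_ord => Ns_le.
have : (Ns * g <= (T.-1 %/ g).+1 * g)%N by rewrite leq_mul2r Ns_le orbT.
have := leq_divM T.-1 g; rewrite mulSn; lia.
Qed.

Lemma mxrank_map_col_mx_pow (K L : fieldType) (f : {rmorphism K -> L}) n m
    (C : 'M[K]_(m, n.+1)) (A : 'M[K]_n.+1) s t :
  \rank (col_mx (map_mx f C *m map_mx f A ^+ s) (map_mx f C *m map_mx f A ^+ t)) =
  \rank (col_mx (C *m A ^+ s) (C *m A ^+ t)).
Proof. by rewrite -(mxrank_map f) map_col_mx !map_mxM !rmorphXn. Qed.

Lemma row_sample_obs_mx (R : realType) (A : 'M[R]_2) (C : 'rV[R]_2) Ns
    (ts : 'I_Ns -> nat) i :
  row i (sample_obs_mx A C ts) = C *m A ^+ ts i.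
Proof. by apply/rowP => j; rewrite !mxE. Qed.

Lemma has_eig_collision_of_rank_lt2 (R : realType) (A : 'M[R]_2) (C : 'rV[R]_2) t1 t2 :
  observable A C -> (forall lam, eigval A lam -> lam != 0) -> (t1 < t2)%N ->
  (\rank (col_mx (C *m A ^+ t1) (C *m A ^+ t2)) < 2)%N -> has_eig_collision A (t2 - t1).
Proof.
move=> obs eig_neq0 t12 rk_lt2.
pose Cc := map_mx (real_complex R) C.
have cplx_mxE : cplx_mx A = map_mx (real_complex R) A by [].
have obsC : \rank (col_mx Cc (Cc *m cplx_mx A)) = 2.
  have := mxrank_map_col_mx_pow (real_complex R) C A 0 1.
  by rewrite cplx_mxE !expr0 !expr1 !mulmx1 => ->.
have unitC : cplx_mx A \in unitmx.
  by rewrite -[_ \in _]negbK -eigenvalue0; apply/negP => /eig_neq0; rewrite eqxx.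
have [c Ad] : exists c, cplx_mx A ^+ (t2 - t1) = c%:M.
  apply: (scalar_pow_of_rank_lt2 (t := t1) obsC unitC).
  by rewrite subnKC ?(ltnW t12) // cplx_mxE mxrank_map_col_mx_pow.
have d_gt0 : (0 < t2 - t1)%N by rewrite subn_gt0.
have [l1 [l2 [eig1 eig2 /eqP l12 pow12]]] :=
  eig_collision_of_scalar_pow (@pchar_num _) obsC unitC d_gt0 Ad.
exists l1, l2; exact: And4 eig1 eig2 l12 pow12.
Qed.

Theorem lemma3 (R : realType) (A : 'M[R]_2) (C : 'rV[R]_2) :
  observable A C ->
  (forall lam : R[i], eigval A lam -> lam != 0) ->
  ((~ (exists h : nat, (0 < h)%N /\ has_eig_collision A h)) ->
     forall t1 t2 : nat, t1 <> t2 ->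
       \rank (col_mx (C *m A ^+ t1) (C *m A ^+ t2)) = 2%N)
  /\
  (forall hbar : nat,
     (0 < hbar)%N -> has_eig_collision A hbar ->
     (forall h : nat, (0 < h)%N -> (h < hbar)%N -> ~ has_eig_collision A h) ->
     forall (t T Ns : nat) (ts : 'I_Ns -> nat),
       (0 < T)%N ->
       injective ts ->
       (forall i, t <= ts i < t + T)%N ->
       (hbar + T <= Ns * hbar)%N ->
       \rank (sample_obs_mx A C ts) = 2%N).
Proof.
move=> obs eig_neq0; split.
  move=> no_collision t1 t2 t12; apply/eqP; rewrite eqn_leq rank_leq_row leqNgt.
  apply/negP => rk_lt2; apply: no_collision.
  have [lt12|lt21|eq12] := ltngtP t1 t2; last by case: (t12 eq12).
    exists (t2 - t1)%N; split; first by rewrite subn_gt0.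
    exact: has_eig_collision_of_rank_lt2 obs eig_neq0 lt12 rk_lt2.
  exists (t1 - t2)%N; split; first by rewrite subn_gt0.
  rewrite mxrank_col_mxC in rk_lt2.
  exact: has_eig_collision_of_rank_lt2 obs eig_neq0 lt21 rk_lt2.
(* only the minimality of [hbar] is needed, not the collision at [hbar] itself *)
move=> hbar hbar_gt0 _ hbar_min t T Ns ts T_gt0 ts_inj ts_window Ns_large.
apply/eqP; rewrite eqn_leq rank_leq_col leqNgt; apply/negP => rk_lt2.
suff : (Ns * hbar < hbar + T)%N by rewrite ltnNge Ns_large.
apply: (card_sparse_window hbar_gt0 T_gt0 ts_inj ts_window) => i j lt_ij.
rewrite leqNgt; apply/negP => gap_small; apply: (hbar_min _ _ gap_small).
  by rewrite subn_gt0.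
apply: (has_eig_collision_of_rank_lt2 obs eig_neq0 lt_ij).
rewrite -(row_sample_obs_mx A C ts i) -(row_sample_obs_mx A C ts j).
exact: leq_ltn_trans (mxrank_col_mx_row _ i j) rk_lt2.
Qed.
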